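(* Let $h$ be a non-degenerate symmetric $(0,2)$-tensor field and $J_1,J_2$ $h$-symmetric $(1,1)$-tensor fields on a smooth manifold $M$, let $H_1,H_2:T^*M\to TM$ be bundle morphisms, and define $\hat J_i(X+\eta)=J_iX+H_i\eta+h(X)-J_i^*\eta$, $i=1,2$, on $TM\oplus T^*M$. Then $\hat J_1\hat J_2=-\hat J_2\hat J_1$ if and only if $J_1J_2+J_2J_1=-(H_1+H_2)h$, $J_1^*J_2^*+J_2^*J_1^*=-h(H_1+H_2)$, and $J_1H_2-H_2J_1^*=H_1J_2^*-J_2H_1$.
   Context: $h$ is viewed as the isomorphism $TM\to T^*M$, $X\mapsto h(X,\cdot)$; $(J^*\eta)(X)=\eta(JX)$; $J$ is $h$-symmetric if $h(JX,Y)=h(X,JY)$. Compositions such as $(H_1+H_2)h$ are compositions of bundle maps. *)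

From HB Require Import structures.
From mathcomp Require Import all_boot all_order all_algebra.
Set Implicit Arguments. Unset Strict Implicit. Unset Printing Implicit Defensive.
Import Order.TTheory GRing.Theory Num.Theory.
Local Open Scope ring_scope.

(* At a point of M, TM is modelled by column
   vectors 'cV_n (coordinates in a local frame) and T*M by column vectors of
   dual coordinates, a covector xi acting by xi(Y) = xi^T *m Y.
   - h : 'M_n is the Gram matrix, h(X,Y) = X^T h Y; as a map TM -> T*M,
     X |-> h(X,.) has coordinates h *m X (h symmetric).
   - J : 'M_n endomorphism of TM; J^* eta = eta o J has coordinates J^T *m eta.
   - H : 'M_n a morphism T*M -> TM.
   On TM (+) T*M = 'cV_(n+n) (X on top, eta below), hat J is the block
   matrix [[J, H], [h, -J^T]]. *)

Definition bil (R : ringType) (n : nat) (h : 'M[R]_n) (X Y : 'cV[R]_n) : 'M[R]_1 :=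
  X^T *m h *m Y.

Definition h_symmetric (R : ringType) (n : nat) (h J : 'M[R]_n) : Prop :=
  forall X Y : 'cV[R]_n, bil h (J *m X) Y = bil h X (J *m Y).

Definition dualmx (R : ringType) (n : nat) (J : 'M[R]_n) : 'M[R]_n := J^T.

Definition hatJ (R : ringType) (n : nat) (h J H : 'M[R]_n) : 'M[R]_(n + n) :=
  block_mx J H h (- dualmx J).

From HB Require Import structures.
From mathcomp Require Import all_boot all_order all_algebra.
Import Order.TTheory GRing.Theory Num.Theory.
Local Open Scope ring_scope.

(* In block form hatJ = [[J, H], [h, -J^T]], and h-symmetry of J says
   J^T h = h J.  The anticommutator hatJ1 hatJ2 + hatJ2 hatJ1 therefore has
   lower-left block h J2 - h J1 + h J1 - h J2 = 0, while its three remaining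
   blocks are the differences of the two sides of the three stated identities. *)

Lemma h_symmetric_trmx (R : comNzRingType) (n : nat) (h J : 'M[R]_n) :
  h_symmetric h J -> J^T *m h = h *m J.
Proof.
move=> hJ; apply/matrixP => i j.
have := hJ (delta_mx i 0) (delta_mx j 0).
rewrite /bil trmx_mul trmx_delta !mulmxA -(mulmxA _ J^T) -(mulmxA _ h J).
by rewrite -!rowE -!colE => /matrixP /(_ 0 0); rewrite !mxE.
Qed.

Lemma block_mx_eq0 (V : zmodType) (m1 m2 n1 n2 : nat)
    (Aul : 'M[V]_(m1, n1)) (Aur : 'M_(m1, n2)) (Adl : 'M_(m2, n1)) (Adr : 'M_(m2, n2)) :
  (block_mx Aul Aur Adl Adr == 0) = [&& Aul == 0, Aur == 0, Adl == 0 & Adr == 0].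
Proof.
apply/eqP/and4P => [|[/eqP-> /eqP-> /eqP-> /eqP->]]; last exact: block_mx0.
by rewrite -block_mx0 => /eq_block_mx[-> -> -> ->].
Qed.

Lemma hatJ_anticommutator (R : comNzRingType) (n : nat) (h J1 J2 H1 H2 : 'M[R]_n) :
  h_symmetric h J1 -> h_symmetric h J2 ->
  hatJ h J1 H1 *m hatJ h J2 H2 + hatJ h J2 H2 *m hatJ h J1 H1 =
  block_mx (J1 *m J2 + J2 *m J1 + (H1 + H2) *m h)
           (J1 *m H2 - H2 *m J1^T - (H1 *m J2^T - J2 *m H1))
           0
           (J1^T *m J2^T + J2^T *m J1^T + h *m (H1 + H2)).
Proof.
move=> /h_symmetric_trmx hJ1 /h_symmetric_trmx hJ2.
rewrite /hatJ /dualmx !mulmx_block add_block_mx !mulmxN !mulNmx !opprK hJ1 hJ2.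
congr block_mx.
- by rewrite mulmxDl addrACA.
- by rewrite opprB addrACA [RHS]addrACA [- _ - H1 *m _]addrC.
- by rewrite -[h *m J1 - _]opprB subrr.
- by rewrite mulmxDr addrACA addrC [h *m H2 + _]addrC.
Qed.

Theorem proposition3p12 (R : realFieldType) (n : nat) (h J1 J2 H1 H2 : 'M[R]_n) :
  h^T = h -> h \in unitmx ->
  h_symmetric h J1 -> h_symmetric h J2 ->
  (hatJ h J1 H1 *m hatJ h J2 H2 = - (hatJ h J2 H2 *m hatJ h J1 H1)) <->
  [/\ J1 *m J2 + J2 *m J1 = - ((H1 + H2) *m h),
      dualmx J1 *m dualmx J2 + dualmx J2 *m dualmx J1 = - (h *m (H1 + H2)) &
      J1 *m H2 - H2 *m dualmx J1 = H1 *m dualmx J2 - J2 *m H1].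
Proof.
move=> _ _ hJ1 hJ2.
apply: (iff_trans (rwP eqP)).
rewrite -addr_eq0 hatJ_anticommutator // block_mx_eq0 eqxx /dualmx.
rewrite subr_eq0 !addr_eq0.
by split=> [/and4P[/eqP-> /eqP-> _ /eqP->] | [-> -> ->]] //; rewrite !eqxx.
Qed.
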